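(* Let $A,B\in\mathrm{SL}_2\mathbb{Z}_{\ge0}$ be noncommuting, well oriented, with $\mathrm{tr}(A)<\mathrm{tr}(B)$ and $\mathrm{tr}(AB)=\mathrm{tr}(B^2)$. Let $w$ be a word that is empty or ends with $b$, and let $k,h\ge0$. Then $[ab^2wab(ab^2)^kab(ab^2)^hab]<[ab^2w(ab^2)^{k+h+2}]$.
   Context: Words are finite strings over $\{a,b\}$; $\phi$ is the monoid homomorphism with $\phi(a)=A,\phi(b)=B$, and $[w]=\mathrm{tr}(\phi(w))$. Fixed points are for the Möbius action on $\partial\mathcal{H}=\mathbb{P}^1\mathbb{R}$; $\alpha^\pm$ ($\beta^\pm$) are the attracting/repelling fixed points of $A$ ($B$), both equal to the unique fixed point if parabolic. With $\partial\mathcal{H}$ cyclically ordered and $[\alpha,\beta]$ the closed counterclockwise interval from $\alpha$ to $\beta$, let $I^+=\{\alpha^+\}$ if $\alpha^+=\beta^+$, and otherwise the one of $[\alpha^+,\beta^+],[\beta^+,\alpha^+]$ mapped into itself by both $A$ and $B$ (if it exists); define $I^-$ likewise with $A^{-1},B^{-1},\alpha^-,\beta^-$. The pair is coherently oriented if both exist, and well oriented if $A,B$ is coherently oriented but $A,B^{-1}$ is not. *)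

From HB Require Import structures.
From mathcomp Require Import all_boot all_order all_algebra.
From mathcomp Require Import Rstruct.
From Stdlib Require Rdefinitions.
Set Implicit Arguments. Unset Strict Implicit. Unset Printing Implicit Defensive.
Import Order.TTheory GRing.Theory Num.Theory.
Local Open Scope ring_scope.

Inductive letter := La | Lb.
Definition word := seq letter.

Definition letter_mx (A B : 'M[int]_2) (l : letter) : 'M[int]_2 :=
  match l with La => A | Lb => B end.

Definition phi (A B : 'M[int]_2) (w : word) : 'M[int]_2 :=
  foldr (fun l M => letter_mx A B l *m M) 1%:M w.

Definition wtr (A B : 'M[int]_2) (w : word) : int := \tr (phi A B w).

Definition wpow (u : word) (n : nat) : word := flatten (nseq n u).

Definition ends_with_b (w : word) : Prop := exists w', w = rcons w' Lb.

Definition SL2Znn (A : 'M[int]_2) : Prop :=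
  \det A = 1 /\ forall i j, 0 <= A i j.

(* None stands for the point oo. *)
Definition P1 := option Rdefinitions.R.

Definition mxR (M : 'M[int]_2) (i j : 'I_2) : Rdefinitions.R := (M i j)%:~R.

Definition mob (M : 'M[int]_2) (p : P1) : P1 :=
  let a := mxR M 0 0 in let b := mxR M 0 1 in
  let c := mxR M 1 0 in let d := mxR M 1 1 in
  match p with
  | Some x => if c * x + d == 0 then None else Some ((a * x + b) / (c * x + d))
  | None => if c == 0 then None else Some (a / c)
  end.

Definition fixedpt (M : 'M[int]_2) (p : P1) : Prop := mob M p = p.

(* |(Moebius map)'(p)|^{-1/2}: for a fixed point p = [x:1] this is |cx+d|,
   for p = oo (then c = 0) it is |a|. *)
Definition inv_sqrt_mult (M : 'M[int]_2) (p : P1) : Rdefinitions.R :=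
  match p with
  | Some x => `|mxR M 1 0 * x + mxR M 1 1|
  | None => `|mxR M 0 0|
  end.

(* attracting fixed point: derivative of modulus <= 1 (strictly < 1 in the
   hyperbolic case; in the parabolic case the unique fixed point is both
   attracting and repelling, as in the paper's convention). *)
Definition attracting (M : 'M[int]_2) (p : P1) : Prop :=
  fixedpt M p /\ 1 <= inv_sqrt_mult M p.
Definition repelling (M : 'M[int]_2) (p : P1) : Prop :=
  fixedpt M p /\ inv_sqrt_mult M p <= 1.

(* membership of x in the closed counterclockwise interval [al, be] of
   dR H = R u {oo}, oriented as the boundary of the upper half plane
   (i.e. increasingly along R, then through oo). *)
Definition in_ccw (al be x : P1) : Prop :=
  match al, be with
  | Some a, Some b =>
      if a <= b then (exists y, x = Some y /\ a <= y <= b)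
      else (x = None \/ exists y, x = Some y /\ (a <= y \/ y <= b))
  | None, Some b => x = None \/ exists y, x = Some y /\ y <= b
  | Some a, None => x = None \/ exists y, x = Some y /\ a <= y
  | None, None => x = None
  end.

Definition invariant_ccw (M : 'M[int]_2) (al be : P1) : Prop :=
  forall x, in_ccw al be x -> in_ccw al be (mob M x).

Definition I_exists (M N : 'M[int]_2) (p q : P1) : Prop :=
  p = q \/
  (invariant_ccw M p q /\ invariant_ccw N p q) \/
  (invariant_ccw M q p /\ invariant_ccw N q p).

Definition coherently_oriented (A B : 'M[int]_2) : Prop :=
  exists alp alm bep bem : P1,
    [/\ attracting A alp, repelling A alm, attracting B bep, repelling B bem
        & I_exists A B alp bep /\ I_exists (invmx A) (invmx B) alm bem].

Definition well_oriented (A B : 'M[int]_2) : Prop :=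
  coherently_oriented A B /\ ~ coherently_oriented A (invmx B).

(* Let Q = AB^2, C = AB and W = phi(w).  By cyclicity of the trace the claim
   reads 0 < tr (W (QXQYQ - CXCYCQ)) with X = Q^k, Y = Q^h; only the
   nonnegativity of A, B and the two trace conditions are needed.  Matrices
   with nonnegative entries and diagonal entries at least 1 are closed under
   products and have positive trace, and W is one, so it suffices that the
   gap QXQYQ - CXCYCQ is one as well.  Since det Q = 1 and tr Q >= 2, every
   power of Q is m + n (Q - 1) with m >= 1, n >= 0, and the gap is bilinear,
   so only X, Y in {1, Q - 1} matter.  In the span of 1, A, B, AB products
   are governed by x = tr A, y = tr B and tr AB = y^2 - 2, so these four gaps
   are explicit; in the basis 1, A - 1, B - 1, (A - 1)(B - 1) of nonnegative
   matrices their coordinates are polynomials in x, y with nonnegative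
   coefficients once 2 <= x < y is encoded as x = u + 2, y = u + e + 3 with
   u, e >= 0. *)

(* Loaded first, so that [ring] remains the MathComp tactic. *)
From Stdlib Require Import ZArith.
From mathcomp Require Import all_boot all_order all_algebra.
From mathcomp Require Import ring zify.
Import Order.TTheory GRing.Theory Num.Theory.
Local Open Scope ring_scope.

Section Matrix2.
Context {R : comNzRingType}.
Implicit Types (M : 'M[R]_2) (a b c d k : R).

Definition mx2 a b c d : 'M[R]_2 :=
  \matrix_(i, j) if i == 0%N :> nat then (if j == 0%N :> nat then a else b)
                 else (if j == 0%N :> nat then c else d).

Lemma mx2E M : M = mx2 (M 0 0) (M 0 1) (M 1 0) (M 1 1).
Proof.
apply/matrixP => i j; rewrite !mxE.
by case: i j => [[|[|i]] ?] // [[|[|j]] ?] //=; congr (M _ _); apply: val_inj.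
Qed.

Lemma mul_mx2 a b c d a' b' c' d' :
  mx2 a b c d *m mx2 a' b' c' d' =
  mx2 (a * a' + b * c') (a * b' + b * d') (c * a' + d * c') (c * b' + d * d').
Proof.
apply/matrixP => i j; rewrite !mxE !big_ord_recr big_ord0 /= !mxE add0r.
by case: i j => [[|[|i]] ?] // [[|[|j]] ?].
Qed.

Lemma add_mx2 a b c d a' b' c' d' :
  mx2 a b c d + mx2 a' b' c' d' = mx2 (a + a') (b + b') (c + c') (d + d').
Proof. by apply/matrixP => i j; rewrite !mxE; case: (_ == _); case: (_ == _). Qed.

Lemma opp_mx2 a b c d : - mx2 a b c d = mx2 (- a) (- b) (- c) (- d).
Proof. by apply/matrixP => i j; rewrite !mxE; case: (_ == _); case: (_ == _). Qed.

Lemma scale_mx2 k a b c d : k *: mx2 a b c d = mx2 (k * a) (k * b) (k * c) (k * d).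
Proof. by apply/matrixP => i j; rewrite !mxE; case: (_ == _); case: (_ == _). Qed.

Lemma scalar_mx2 k : k%:M = mx2 k 0 0 k.
Proof.
by apply/matrixP => i j; rewrite !mxE; case: i j => [[|[|i]] ?] // [[|[|j]] ?].
Qed.

Lemma tr_mx2 a b c d : \tr (mx2 a b c d) = a + d :> R.
Proof. by rewrite /mxtrace !big_ord_recr big_ord0 /= !mxE add0r. Qed.

Lemma det_mx2 a b c d : \det (mx2 a b c d) = a * d - b * c :> R.
Proof.
rewrite (expand_det_row _ 0) !big_ord_recr big_ord0 /= /cofactor !mxE /=.
by rewrite !det_mx11 !mxE /= add0r expr0 expr1 mul1r mulN1r mulrN.
Qed.

Lemma Cayley_Hamilton2 M : M *m M = \tr M *: M - (\det M)%:M.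
Proof.
rewrite (mx2E M); move: (M 0 0) (M 0 1) (M 1 0) (M 1 1) => a b c d.
rewrite mul_mx2 tr_mx2 det_mx2 scale_mx2 scalar_mx2 opp_mx2 add_mx2.
by congr mx2; ring.
Qed.

Lemma mxtrace_sqr2 M : \tr (M *m M) = \tr M * \tr M - \det M *+ 2.
Proof. by rewrite Cayley_Hamilton2 linearB /= mxtraceZ mxtrace_scalar. Qed.

End Matrix2.

Section NonnegativeMatrices.
Context {R : numDomainType}.

Definition nnegmx {m n} (M : 'M[R]_(m, n)) := forall i j, 0 <= M i j.

Definition posmx {n} (M : 'M[R]_n) := nnegmx (M - 1%:M).

Lemma nnegmxD {m n} (M N : 'M[R]_(m, n)) : nnegmx M -> nnegmx N -> nnegmx (M + N).
Proof. by move=> hM hN i j; rewrite mxE addr_ge0. Qed.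

Lemma nnegmxZ {m n} a (M : 'M[R]_(m, n)) : 0 <= a -> nnegmx M -> nnegmx (a *: M).
Proof. by move=> ha hM i j; rewrite mxE mulr_ge0. Qed.

Lemma nnegmxM {m n p} (M : 'M[R]_(m, n)) (N : 'M[R]_(n, p)) :
  nnegmx M -> nnegmx N -> nnegmx (M *m N).
Proof. by move=> hM hN i j; rewrite mxE sumr_ge0 // => k _; rewrite mulr_ge0. Qed.

Lemma nnegmx_scalar {n} a : 0 <= a -> nnegmx (a%:M : 'M[R]_n).
Proof. by move=> ha i j; rewrite mxE; case: (i == j). Qed.

Lemma posmx_nnegmx {n} (M : 'M[R]_n) : posmx M -> nnegmx M.
Proof. by move=> hM; rewrite -(subrK 1%:M M); apply: nnegmxD => //; apply: nnegmx_scalar. Qed.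

Lemma posmxM {n} {M N : 'M[R]_n} : posmx M -> posmx N -> posmx (M *m N).
Proof.
move=> hM hN; rewrite /posmx.
have -> : M *m N - 1%:M = (M - 1%:M) *m (N - 1%:M) + (M - 1%:M) + (N - 1%:M).
  by rewrite mulmxBl !mulmxBr !mulmx1 mul1mx; apply/matrixP => i j; rewrite !mxE; ring.
by do 2 apply: nnegmxD => //; exact: nnegmxM.
Qed.

Lemma posmx_comb {n} (P N : 'M[R]_n) a b :
  posmx P -> nnegmx N -> 1 <= a -> 0 <= b -> posmx (a *: P + b *: N).
Proof.
move=> hP hN ha hb; rewrite /posmx.
have -> : a *: P + b *: N - 1%:M = a *: (P - 1%:M) + (a - 1)%:M + b *: N.
  by rewrite scalerBr scalemx1 raddfB /=; apply/matrixP => i j; rewrite !mxE; ring.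
apply: nnegmxD; first apply: nnegmxD.
- by apply: nnegmxZ => //; apply: le_trans ha.
- by apply: nnegmx_scalar; rewrite subr_ge0.
- exact: nnegmxZ.
Qed.

Lemma posmx_mxtrace {n} {M : 'M[R]_n} : posmx M -> n%:R <= \tr M.
Proof.
move=> hM; rewrite -(subrK 1%:M M) linearD /= mxtrace1 lerDr.
by rewrite /mxtrace sumr_ge0.
Qed.

Lemma nnegmx_mx2 (a b c d : R) :
  0 <= a -> 0 <= b -> 0 <= c -> 0 <= d -> nnegmx (mx2 a b c d).
Proof. by move=> ha hb hc hd i j; rewrite mxE; do 2 case: ifP. Qed.

Lemma posmx1 n : posmx (1%:M : 'M[R]_n).
Proof. by move=> i j; rewrite subrr mxE. Qed.

End NonnegativeMatrices.

Lemma SL2Znn_posmx {A : 'M[int]_2} : SL2Znn A -> posmx A.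
Proof.
case=> det1 ge0; move: det1 (ge0 0 0) (ge0 0 1) (ge0 1 0) (ge0 1 1).
rewrite /posmx (mx2E A) det_mx2 !mxE /= scalar_mx2 opp_mx2 add_mx2.
move: (A 0 0) (A 0 1) (A 1 0) (A 1 1) => a b c d det1 ha hb hc hd.
by apply: nnegmx_mx2; rewrite ?oppr0 ?addr0 ?subr_ge0 //; nia.
Qed.

Section Words.
Variables A B : 'M[int]_2.

Lemma phi_cat w1 w2 : phi A B (w1 ++ w2) = phi A B w1 *m phi A B w2.
Proof. by elim: w1 => [|l w IH] /=; rewrite ?mul1mx // /phi /= -/(phi A B _) IH mulmxA. Qed.

Lemma phi_wpow u n : phi A B (wpow u n) = phi A B u ^+ n.
Proof. by elim: n => [|n IH] //; rewrite exprS /wpow /= phi_cat -/(wpow u n) IH. Qed.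

Lemma phi_posmx w : posmx A -> posmx B -> posmx (phi A B w).
Proof.
move=> pA pB; elim: w => [|l w IH]; first exact: posmx1.
by apply: posmxM => //; case: l.
Qed.

End Words.

Section Span.
Context {R : comNzRingType}.
Implicit Types (A B : 'M[R]_2) (u v X Y : R * R * R * R) (x y z dA dB : R).

Definition abcomb A B u : 'M[R]_2 :=
  let: (u0, u1, u2, u3) := u in u0%:M + u1 *: A + u2 *: B + u3 *: (A *m B).

(* Structure constants of the basis 1, A, B, AB (x, y, z the traces of A, B,
   AB and dA, dB the determinants): they follow from A^2 = xA - dA,
   B^2 = yB - dB and AB + BA = yA + xB + (z - xy). *)
Definition abc_mul x y z dA dB u v : R * R * R * R :=
  let: (u0, u1, u2, u3) := u in let: (v0, v1, v2, v3) := v in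
  (u0*v0 - u1*v1*dA + u2*v1*(z - x*y) - u2*v2*dB - u2*v3*x*dB - u3*v1*y*dA - u3*v3*dA*dB,
   u0*v1 + u1*v0 + u1*v1*x + u2*v1*y + u2*v3*dB + u3*v1*z - u3*v2*dB,
   u0*v2 + u2*v0 - u1*v3*dA + u2*v1*x + u2*v2*y + u2*v3*z + u3*v1*dA,
   u0*v3 + u3*v0 + u1*v2 + u1*v3*x - u2*v1 + u3*v2*y + u3*v3*z).

Definition abc_sub u v : R * R * R * R :=
  let: (u0, u1, u2, u3) := u in let: (v0, v1, v2, v3) := v in
  (u0 - v0, u1 - v1, u2 - v2, u3 - v3).

Lemma abcomb_mul A B u v :
  abcomb A B u *m abcomb A B v =
  abcomb A B (abc_mul (\tr A) (\tr B) (\tr (A *m B)) (\det A) (\det B) u v).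
Proof.
case: u => [[[u0 u1] u2] u3]; case: v => [[[v0 v1] v2] v3] /=.
rewrite (mx2E A) (mx2E B).
move: (A 0 0) (A 0 1) (A 1 0) (A 1 1) (B 0 0) (B 0 1) (B 1 0) (B 1 1) =>
  a b c d p q r s.
rewrite !(mul_mx2, tr_mx2, det_mx2, scale_mx2, scalar_mx2, add_mx2).
by congr mx2; ring.
Qed.

Lemma abcomb_sub A B u v : abcomb A B u - abcomb A B v = abcomb A B (abc_sub u v).
Proof.
case: u => [[[u0 u1] u2] u3]; case: v => [[[v0 v1] v2] v3] /=.
by apply/matrixP => i j; rewrite !mxE; ring.
Qed.

Definition abc1 : R * R * R * R := (1, 0, 0, 0).
Definition abcB : R * R * R * R := (0, 0, 1, 0).
Definition abcAB : R * R * R * R := (0, 0, 0, 1).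
Definition abcABB y : R * R * R * R := (0, -1, 0, y).
Definition abcG y : R * R * R * R := (-1, -1, 0, y).

Lemma abcomb1 A B : abcomb A B abc1 = 1%:M.
Proof. by apply/matrixP => i j; rewrite !mxE; ring. Qed.

Lemma abcombAB A B : abcomb A B abcAB = A *m B.
Proof. by apply/matrixP => i j; rewrite !mxE; ring. Qed.

Lemma abcombB A B : abcomb A B abcB = B.
Proof. by apply/matrixP => i j; rewrite !mxE; ring. Qed.

Lemma abcombABB A B : \det A = 1 -> \det B = 1 ->
  A *m B *m B = abcomb A B (abcABB (\tr B)).
Proof.
move=> dA dB; have := abcomb_mul A B abcAB abcB.
rewrite abcombAB abcombB => ->; rewrite dA dB; congr abcomb.
by rewrite /= /abcABB; congr (_, _, _, _); ring.
Qed.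

Lemma abcombG A B : \det A = 1 -> \det B = 1 ->
  A *m B *m B - 1%:M = abcomb A B (abcG (\tr B)).
Proof.
move=> dA dB; rewrite abcombABB // -(abcomb1 A B) abcomb_sub; congr abcomb.
by rewrite /= /abcG; congr (_, _, _, _); ring.
Qed.

End Span.

Section Gap.
Context {R : comNzRingType} {n : nat}.
Implicit Types (Q C X Y : 'M[R]_n) (a b : R).

Definition gap Q C X Y := Q *m X *m Q *m Y *m Q - C *m X *m C *m Y *m C *m Q.

Lemma gap_combl Q C X1 X2 Y a b :
  gap Q C (a *: X1 + b *: X2) Y = a *: gap Q C X1 Y + b *: gap Q C X2 Y.
Proof.
rewrite /gap !(mulmxDl, mulmxDr) -!(scalemxAl, scalemxAr).
by rewrite !scalerBr opprD addrACA.
Qed.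

Lemma gap_combr Q C X Y1 Y2 a b :
  gap Q C X (a *: Y1 + b *: Y2) = a *: gap Q C X Y1 + b *: gap Q C X Y2.
Proof.
rewrite /gap !(mulmxDl, mulmxDr) -!(scalemxAl, scalemxAr).
by rewrite !scalerBr opprD addrACA.
Qed.

End Gap.

Lemma wtr_gap (A B : 'M[int]_2) w k h :
  let Q := A *m B *m B in
  wtr A B ([:: La; Lb; Lb] ++ w ++ wpow [:: La; Lb; Lb] (k + h + 2)) -
  wtr A B ([:: La; Lb; Lb] ++ w ++ [:: La; Lb] ++ wpow [:: La; Lb; Lb] k
           ++ [:: La; Lb] ++ wpow [:: La; Lb; Lb] h ++ [:: La; Lb]) =
  \tr (phi A B w *m gap Q (A *m B) (Q ^+ k) (Q ^+ h)).
Proof.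
move=> Q; rewrite /wtr !phi_cat !phi_wpow (_ : phi A B [:: La; Lb; Lb] = Q); last first.
  by rewrite /phi /= mulmx1 mulmxA.
rewrite (_ : phi A B [:: La; Lb] = A *m B); last by rewrite /phi /= mulmx1.
have -> : Q ^+ (k + h + 2) = Q *m Q ^+ k *m (Q *m Q ^+ h).
  by rewrite (_ : (k + h + 2 = k.+1 + h.+1)%N) ?exprD ?exprS //; lia.
by rewrite !(mxtrace_mulC Q) -raddfB /= /gap mulmxBr !mulmxA.
Qed.

Lemma posspan_step {R : comNzRingType} (Q : 'M[R]_2) m n :
  Q *m (m *: 1%:M + n *: (Q - 1%:M)) =
  (m + n * (\tr Q - 1) - n * \det Q) *: 1%:M + (m + n * (\tr Q - 1)) *: (Q - 1%:M).
Proof.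
rewrite (mx2E Q); move: (Q 0 0) (Q 0 1) (Q 1 0) (Q 1 1) => a b c d.
rewrite !(scalar_mx2, opp_mx2, add_mx2, scale_mx2, mul_mx2, tr_mx2, det_mx2).
by congr mx2; ring.
Qed.

Section PositiveSpan.
Context {R : numDomainType}.
Implicit Types (Q C X Y : 'M[R]_2).

Definition posspan Q X :=
  exists m n, [/\ 1 <= m, 0 <= n & X = m *: 1%:M + n *: (Q - 1%:M)].

Lemma posspan_exp Q k : \det Q = 1 -> 2 <= \tr Q -> posspan Q (Q ^+ k).
Proof.
move=> dQ tQ; elim: k => [|k [m [n [hm hn eX]]]].
  by exists 1, 0; rewrite expr0 scale1r scale0r addr0.
have t2 : 0 <= n * (\tr Q - 2) by rewrite mulr_ge0 // subr_ge0.
exists (m + n * (\tr Q - 1) - n), (m + n * (\tr Q - 1)).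
rewrite exprS -mulmxE eX posspan_step dQ mulr1.
have -> : m + n * (\tr Q - 1) - n = m + n * (\tr Q - 2) by ring.
split => //; first by rewrite ler_wpDr.
rewrite (_ : m + n * (\tr Q - 1) = m + n * (\tr Q - 2) + n); last by ring.
by rewrite !addr_ge0 // (le_trans ler01).
Qed.

Lemma gap_posmx_posspan Q C X Y :
  posmx (gap Q C 1%:M 1%:M) -> posmx (gap Q C 1%:M (Q - 1%:M)) ->
  posmx (gap Q C (Q - 1%:M) 1%:M) -> posmx (gap Q C (Q - 1%:M) (Q - 1%:M)) ->
  posspan Q X -> posspan Q Y -> posmx (gap Q C X Y).
Proof.
move=> p11 p1G pG1 pGG [m [n [hm hn ->]]] [m' [n' [hm' hn' ->]]].
rewrite gap_combl !gap_combr.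
apply: posmx_comb => //.
  by apply: posmx_comb => //; apply: posmx_nnegmx.
by apply/posmx_nnegmx/posmx_comb => //; apply: posmx_nnegmx.
Qed.

End PositiveSpan.

Section GapCoordinates.
Context {R : comNzRingType}.
Implicit Types (A B : 'M[R]_2) (x y : R) (X Y : R * R * R * R).

(* The products are associated in balanced form: this keeps the unfolded
   coordinates small enough for [ring]. *)
Definition gap_abc x y X Y : R * R * R * R :=
  let mul := abc_mul x y (y * y - 2) 1 1 in
  let Q := abcABB y in let C := abcAB in
  abc_sub (mul (mul (mul Q X) (mul Q Y)) Q) (mul (mul (mul C X) (mul C Y)) (mul C Q)).

Lemma gap_abcomb A B X Y :
  \det A = 1 -> \det B = 1 -> \tr (A *m B) = \tr B * \tr B - 2 ->
  gap (A *m B *m B) (A *m B) (abcomb A B X) (abcomb A B Y) =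
  abcomb A B (gap_abc (\tr A) (\tr B) X Y).
Proof.
move=> dA dB tAB; rewrite /gap abcombABB // -(abcombAB A B).
set Q := abcomb _ _ (abcABB _); set C := abcomb _ _ abcAB.
set X' := abcomb _ _ X; set Y' := abcomb _ _ Y.
have -> : Q *m X' *m Q *m Y' *m Q = Q *m X' *m (Q *m Y') *m Q by rewrite !mulmxA.
have -> : C *m X' *m C *m Y' *m C *m Q = C *m X' *m (C *m Y') *m (C *m Q).
  by rewrite !mulmxA.
by rewrite !abcomb_mul abcomb_sub dA dB tAB.
Qed.

Lemma gap_abc11 x y : gap_abc x y abc1 abc1 =
  (2 * y + x - y ^+ 3,
   - 3 + 6 * y ^+ 2 - 4 * x * y - x ^+ 2 - 2 * y ^+ 4 + 2 * x * y ^+ 3,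
   3 - 4 * y ^+ 2 + y ^+ 4,
   3 * y - 6 * y ^+ 3 + 4 * x * y ^+ 2 + x ^+ 2 * y + 2 * y ^+ 5 - 2 * x * y ^+ 4).
Proof. by rewrite /gap_abc /=; congr (_, _, _, _); ring. Qed.

Lemma gap_abc1G x y : gap_abc x y abc1 (abcG y) =
  (1 - 2 * y - x - 4 * y ^+ 2 - 4 * x * y - x ^+ 2 + y ^+ 3 + 4 * y ^+ 4 + 2 * x * y ^+ 3 - y ^+ 6,
   3 + 5 * y + 4 * x - 6 * y ^+ 2 + 4 * x * y + x ^+ 2 - 14 * y ^+ 3 + x * y ^+ 2 + 6 * x ^+ 2 * y + x ^+ 3 + 2 * y ^+ 4 - 2 * x * y ^+ 3 + 10 * y ^+ 5 - 6 * x * y ^+ 4 - 3 * x ^+ 2 * y ^+ 3 - 2 * y ^+ 7 + 2 * x * y ^+ 6,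
   - 3 - 6 * y - 4 * x + 4 * y ^+ 2 + 11 * y ^+ 3 + 4 * x * y ^+ 2 - y ^+ 4 - 6 * y ^+ 5 - x * y ^+ 4 + y ^+ 7,
   1 - 3 * y - 5 * y ^+ 2 - 4 * x * y + 6 * y ^+ 3 - 4 * x * y ^+ 2 - x ^+ 2 * y + 14 * y ^+ 4 - x * y ^+ 3 - 6 * x ^+ 2 * y ^+ 2 - x ^+ 3 * y - 2 * y ^+ 5 + 2 * x * y ^+ 4 - 10 * y ^+ 6 + 6 * x * y ^+ 5 + 3 * x ^+ 2 * y ^+ 4 + 2 * y ^+ 8 - 2 * x * y ^+ 7).
Proof. by rewrite /gap_abc /=; congr (_, _, _, _); ring. Qed.

Lemma gap_abcG1 x y : gap_abc x y (abcG y) abc1 =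
  (- 1 - 2 * y - x - 3 * y ^+ 2 - 4 * x * y - x ^+ 2 + y ^+ 3 + 4 * y ^+ 4 + 2 * x * y ^+ 3 - y ^+ 6,
   3 + 4 * y + 4 * x - 6 * y ^+ 2 + 4 * x * y + x ^+ 2 - 14 * y ^+ 3 + x * y ^+ 2 + 6 * x ^+ 2 * y + x ^+ 3 + 2 * y ^+ 4 - 2 * x * y ^+ 3 + 10 * y ^+ 5 - 6 * x * y ^+ 4 - 3 * x ^+ 2 * y ^+ 3 - 2 * y ^+ 7 + 2 * x * y ^+ 6,
   - 3 - 4 * y - 3 * x + 4 * y ^+ 2 + 10 * y ^+ 3 + 4 * x * y ^+ 2 - y ^+ 4 - 6 * y ^+ 5 - x * y ^+ 4 + y ^+ 7,
   - 1 - 3 * y - 4 * y ^+ 2 - 4 * x * y + 6 * y ^+ 3 - 4 * x * y ^+ 2 - x ^+ 2 * y + 14 * y ^+ 4 - x * y ^+ 3 - 6 * x ^+ 2 * y ^+ 2 - x ^+ 3 * y - 2 * y ^+ 5 + 2 * x * y ^+ 4 - 10 * y ^+ 6 + 6 * x * y ^+ 5 + 3 * x ^+ 2 * y ^+ 4 + 2 * y ^+ 8 - 2 * x * y ^+ 7).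
Proof. by rewrite /gap_abc /=; congr (_, _, _, _); ring. Qed.

Lemma gap_abcGG x y : gap_abc x y (abcG y) (abcG y) =
  (y + x + 7 * y ^+ 2 + 8 * x * y + 2 * x ^+ 2 + 5 * y ^+ 3 + 11 * x * y ^+ 2 + 6 * x ^+ 2 * y + x ^+ 3 - 8 * y ^+ 4 - 4 * x * y ^+ 3 - 11 * y ^+ 5 - 12 * x * y ^+ 4 - 3 * x ^+ 2 * y ^+ 3 + 2 * y ^+ 6 + 6 * y ^+ 7 + 3 * x * y ^+ 6 - y ^+ 9,
   - 2 - 9 * y - 8 * x - y ^+ 2 - 16 * x * y - 6 * x ^+ 2 + 28 * y ^+ 3 - 2 * x * y ^+ 2 - 12 * x ^+ 2 * y - 2 * x ^+ 3 + 27 * y ^+ 4 + 20 * x * y ^+ 3 - 12 * x ^+ 2 * y ^+ 2 - 8 * x ^+ 3 * y - x ^+ 4 - 20 * y ^+ 5 + 12 * x * y ^+ 4 + 6 * x ^+ 2 * y ^+ 3 - 33 * y ^+ 6 + 2 * x * y ^+ 5 + 18 * x ^+ 2 * y ^+ 4 + 4 * x ^+ 3 * y ^+ 3 + 4 * y ^+ 7 - 4 * x * y ^+ 6 + 14 * y ^+ 8 - 8 * x * y ^+ 7 - 5 * x ^+ 2 * y ^+ 6 - 2 * y ^+ 10 + 2 * x * y ^+ 9,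
   2 + 10 * y + 7 * x + 5 * y ^+ 2 + 12 * x * y + 4 * x ^+ 2 - 21 * y ^+ 3 - 8 * x * y ^+ 2 - 23 * y ^+ 4 - 22 * x * y ^+ 3 - 4 * x ^+ 2 * y ^+ 2 + 12 * y ^+ 5 + 2 * x * y ^+ 4 + 22 * y ^+ 6 + 12 * x * y ^+ 5 + x ^+ 2 * y ^+ 4 - 2 * y ^+ 7 - 8 * y ^+ 8 - 2 * x * y ^+ 7 + y ^+ 10,
   2 * y + 9 * y ^+ 2 + 8 * x * y + y ^+ 3 + 16 * x * y ^+ 2 + 6 * x ^+ 2 * y - 28 * y ^+ 4 + 2 * x * y ^+ 3 + 12 * x ^+ 2 * y ^+ 2 + 2 * x ^+ 3 * y - 27 * y ^+ 5 - 20 * x * y ^+ 4 + 12 * x ^+ 2 * y ^+ 3 + 8 * x ^+ 3 * y ^+ 2 + x ^+ 4 * y + 20 * y ^+ 6 - 12 * x * y ^+ 5 - 6 * x ^+ 2 * y ^+ 4 + 33 * y ^+ 7 - 2 * x * y ^+ 6 - 18 * x ^+ 2 * y ^+ 5 - 4 * x ^+ 3 * y ^+ 4 - 4 * y ^+ 8 + 4 * x * y ^+ 7 - 14 * y ^+ 9 + 8 * x * y ^+ 8 + 5 * x ^+ 2 * y ^+ 7 + 2 * y ^+ 11 - 2 * x * y ^+ 10).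
Proof. by rewrite /gap_abc /=; congr (_, _, _, _); ring. Qed.

End GapCoordinates.

(* The coordinates of abcomb A B c in the basis 1, A - 1, B - 1, (A - 1)(B - 1)
   are nonnegative, the first one at least 1. *)
Definition abc_cone {R : numDomainType} (c : R * R * R * R) : Prop :=
  let: (c0, c1, c2, c3) := c in
  0 <= c3 /\ 0 <= c1 + c3 /\ 0 <= c2 + c3 /\ 1 <= c0 + c1 + c2 + c3.

Lemma posmx_abcomb {R : numDomainType} (A B : 'M[R]_2) c :
  posmx A -> posmx B -> abc_cone c -> posmx (abcomb A B c).
Proof.
case: c => [[[c0 c1] c2] c3] pA pB [h3 [h13 [h23 hs]]]; rewrite /posmx.
have -> : abcomb A B (c0, c1, c2, c3) - 1%:M =
    (c0 + c1 + c2 + c3 - 1)%:M + (c1 + c3) *: (A - 1%:M) + (c2 + c3) *: (B - 1%:M)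
    + c3 *: ((A - 1%:M) *m (B - 1%:M)).
  rewrite /= mulmxBl !mulmxBr !mulmx1 mul1mx.
  by apply/matrixP => i j; rewrite !mxE; ring.
apply: nnegmxD; last by apply: nnegmxZ => //; apply: nnegmxM.
apply: nnegmxD; last exact: nnegmxZ.
apply: nnegmxD; last exact: nnegmxZ.
by apply: nnegmx_scalar; rewrite subr_ge0.
Qed.

(* Proves a goal [Z.le a t] when the expansion of [t - a] has nonnegative
   coefficients in atoms known to be nonnegative.  The expansion is found by
   [ring_simplify] inside a discarded proof, whose term would be slow to
   check, and is certified by [lia]. *)
Ltac le_by_expansion :=
  lazymatch goal with |- Z.le ?a ?t =>
    let e := constr:(ltac:(eexists; ring_simplify; reflexivity) :
                       exists s, Z.sub t a = s) in
    lazymatch e with ex_intro _ ?s _ =>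
      apply: (proj1 (Z.le_0_sub a t)); (have -> : Z.sub t a = s by lia);
      repeat match goal with
        | |- Z.le Z0 (Z.add _ _) => apply: Z.add_nonneg_nonneg
        | |- Z.le Z0 (Z.mul _ _) => apply: Z.mul_nonneg_nonneg
        | |- Z.le Z0 (Z.pow _ _) => apply: Z.pow_nonneg
        | |- Z.le Z0 (Zpos _) => exact: Pos2Z.is_nonneg
        | |- _ => assumption
        end
    end
  end.

Lemma gap_abc_cone (x y : int) : 2 <= x -> x < y ->
  abc_cone (gap_abc x y abc1 abc1) /\ abc_cone (gap_abc x y abc1 (abcG y)) /\
  abc_cone (gap_abc x y (abcG y) abc1) /\ abc_cone (gap_abc x y (abcG y) (abcG y)).
Proof.
rewrite gap_abc11 gap_abc1G gap_abcG1 gap_abcGG => hx hxy.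
have [u hu ex] : exists2 u, 0 <= u & x = u + 2 by exists (x - 2); lia.
have [e he ->] : exists2 e, 0 <= e & y = u + e + 3 by exists (y - u - 3); lia.
rewrite {}ex /=; clear hx hxy; zify; move/Z.leb_le: hu => hu; move/Z.leb_le: he => he.
clear -hu he; repeat match goal with |- _ /\ _ => split end;
  apply/Z.leb_le; le_by_expansion.
Qed.

Lemma gap_posmx (A B : 'M[int]_2) X Y :
  SL2Znn A -> SL2Znn B -> \tr A < \tr B -> \tr (A *m B) = \tr (B *m B) ->
  posspan (A *m B *m B) X -> posspan (A *m B *m B) Y ->
  posmx (gap (A *m B *m B) (A *m B) X Y).
Proof.
move=> sA sB ltAB; rewrite mxtrace_sqr2 sB.1 => tAB sX sY.
have [pA pB] := (SL2Znn_posmx sA, SL2Znn_posmx sB).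
have [c11 [c1G [cG1 cGG]]] := gap_abc_cone _ _ (posmx_mxtrace pA) ltAB.
apply: gap_posmx_posspan sX sY;
  rewrite ?(abcombG _ _ sA.1 sB.1) -?(abcomb1 A B) gap_abcomb ?sA.1 ?sB.1 //;
  exact: posmx_abcomb.
Qed.

Theorem lemma6p3 (A B : 'M[int]_2) (w : word) (k h : nat) :
  SL2Znn A -> SL2Znn B ->
  A *m B != B *m A ->
  well_oriented A B ->
  \tr A < \tr B ->
  \tr (A *m B) = \tr (B *m B) ->
  (w = [::] \/ ends_with_b w) ->
  wtr A B ([:: La; Lb; Lb] ++ w ++ [:: La; Lb] ++ wpow [:: La; Lb; Lb] k
           ++ [:: La; Lb] ++ wpow [:: La; Lb; Lb] h ++ [:: La; Lb])
  < wtr A B ([:: La; Lb; Lb] ++ w ++ wpow [:: La; Lb; Lb] (k + h + 2)).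
Proof.
move=> sA sB _ _ ltAB tAB _.
have [pA pB] := (SL2Znn_posmx sA, SL2Znn_posmx sB).
have pQ : posmx (A *m B *m B) by do 2 apply: posmxM => //.
have dQ : \det (A *m B *m B) = 1 by rewrite !det_mulmx sA.1 sB.1 !mulr1.
rewrite -subr_gt0 wtr_gap.
apply: (lt_le_trans _ (posmx_mxtrace (posmxM (phi_posmx _ _ w pA pB) _))) => //.
by apply: gap_posmx => //; apply: posspan_exp => //; exact: posmx_mxtrace.
Qed.
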